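(* Let $\theta<\kappa$ be a regular cardinal and let $I$ be a weakly $\theta$-saturated, $\theta$-indecomposable ideal on the cardinal $\kappa$. If $\delta$ is an ordinal of cofinality $\theta$, then every function $f:\kappa\to\delta$ is bounded below $\delta$ almost everywhere: there is $\beta<\delta$ with $\{\alpha<\kappa:f(\alpha)\geq\beta\}\in I$.
   Context: By an ideal on a cardinal $\kappa$ we mean a proper ideal on $\kappa$ containing all bounded subsets of $\kappa$. $I$ is weakly $\theta$-saturated if there is no partition of $\kappa$ into $\theta$ pairwise disjoint sets not in $I$. $I$ is $\theta$-indecomposable if whenever $\langle A_i:i<\theta\rangle$ are subsets of $\kappa$ with $\bigcup_{i<\theta}A_i\notin I$, there is $w\subseteq\theta$ with $|w|<\theta$ and $\bigcup_{i\in w}A_i\notin I$. *)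

(* An ordinal is (the order type of) a well-ordered type; a cardinal is an
   initial ordinal; sets are predicates; cardinality comparison is via
   injections / bijections. *)
From Stdlib Require Import Classical.

Record wordered := WOrdered {
  wo_car :> Type;
  wo_lt : wo_car -> wo_car -> Prop;
  wo_wf : well_founded wo_lt;
  wo_trans : forall x y z, wo_lt x y -> wo_lt y z -> wo_lt x z;
  wo_total : forall x y, wo_lt x y \/ x = y \/ wo_lt y x
}.

Arguments wo_lt {w} _ _.

Definition card_le (A B : Type) : Prop :=
  exists f : A -> B, forall x y, f x = f y -> x = y.

Definition card_eq (A B : Type) : Prop :=
  exists f : A -> B, (forall x y, f x = f y -> x = y) /\ (forall b, exists a, f a = b).

Definition card_lt (A B : Type) : Prop := card_le A B /\ ~ card_le B A.

Definition below {O : wordered} (x : O) : Type := { y : O | wo_lt y x }.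

Definition is_cardinal (K : wordered) : Prop :=
  forall x : K, ~ card_le K (below x).

Definition cofinal {O : wordered} (X : O -> Prop) : Prop :=
  forall x : O, exists y, X y /\ (x = y \/ wo_lt x y).

Definition has_cof (O : wordered) (T : Type) : Prop :=
  (exists X : O -> Prop, cofinal X /\ card_eq { y | X y } T) /\
  (forall X : O -> Prop, cofinal X -> card_le T { y | X y }).

Definition is_regular (K : wordered) : Prop :=
  is_cardinal K /\ card_le nat K /\ has_cof K K.

Definition is_ideal (K : wordered) (I : (K -> Prop) -> Prop) : Prop :=
  ~ I (fun _ => True) /\
  (forall A B : K -> Prop, I B -> (forall x, A x -> B x) -> I A) /\
  (forall A B : K -> Prop, I A -> I B -> I (fun x => A x \/ B x)) /\
  (forall (b : K) (A : K -> Prop), (forall y, A y -> wo_lt y b) -> I A).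

Definition weakly_saturated (T : Type) (K : wordered)
    (I : (K -> Prop) -> Prop) : Prop :=
  ~ exists P : T -> K -> Prop,
      (forall i j x, P i x -> P j x -> i = j) /\
      (forall x, exists i, P i x) /\
      (forall i, ~ I (P i)).

Definition indecomposable (T : Type) (K : wordered)
    (I : (K -> Prop) -> Prop) : Prop :=
  forall A : T -> K -> Prop,
    ~ I (fun x => exists i, A i x) ->
    exists w : T -> Prop, card_lt { i | w i } T /\
      ~ I (fun x => exists i, w i /\ A i x).

(* Suppose every superlevel set [{alpha | beta <= f alpha}] is I-positive.
   Covering such a set by the theta pieces [{alpha | beta <= f alpha <= x_i}],
   for a cofinal sequence (x_i), indecomposability leaves fewer than theta of
   them with positive union; these x_i are bounded, so some band
   [beta <= f alpha < h beta] is positive.  Iterating [h] along theta (each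
   step bounds fewer than theta earlier values) gives [b : theta -> delta] with
   [h (b j) < b i] for [j < i].  The layers
   [{alpha | b i <= f alpha < b j for all j > i}] are pairwise disjoint, and
   the i-th contains the positive band above [b i]: theta disjoint positive
   sets, against weak saturation. *)
From Stdlib Require Import Classical ClassicalEpsilon FunctionalExtensionality
  ProofIrrelevance.

Lemma wo_irrefl (O : wordered) (x : O) : ~ wo_lt x x.
Proof.
  induction (wo_wf O x) as [x _ IH]. intro H. exact (IH x H H).
Qed.

Lemma card_le_trans (A B C : Type) : card_le A B -> card_le B C -> card_le A C.
Proof.
  intros [f Hf] [g Hg]. exists (fun x => g (f x)). auto.
Qed.

Lemma card_le_image (J O : Type) (g : J -> O) :
  card_le { y | exists j, g j = y } J.
Proof.
  exists (fun s : { y | exists j, g j = y } =>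
    proj1_sig (constructive_indefinite_description _ (proj2_sig s))).
  intros [x Hx] [y Hy]; simpl.
  destruct (constructive_indefinite_description _ Hx) as [j1 E1].
  destruct (constructive_indefinite_description _ Hy) as [j2 E2]; simpl.
  intros <-. subst. apply subset_eq_compat. reflexivity.
Qed.

Lemma small_family_strictly_bounded (O : wordered) (T J : Type) (g : J -> O) :
  has_cof O T -> ~ card_le T J -> exists y : O, forall j, wo_lt (g j) y.
Proof.
  intros [_ Hmin] HJ. apply NNPP. intro Hunb.
  assert (Hcof : cofinal (fun y => exists j, g j = y)).
  { intro x. apply NNPP. intro Hx. apply Hunb. exists x. intro j.
    destruct (wo_total _ (g j) x) as [H|[H|H]]; auto;
      exfalso; apply Hx; exists (g j); split; eauto. }
  exact (HJ (card_le_trans _ _ _ (Hmin _ Hcof) (card_le_image _ _ g))).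
Qed.

Definition superlevel {K O : wordered} (f : K -> O) (beta : O) (alpha : K) : Prop :=
  f alpha = beta \/ wo_lt beta (f alpha).

Lemma indecomposable_positive_band (theta K O : wordered)
    (I : (K -> Prop) -> Prop) (f : K -> O) (A : K -> Prop) :
  (forall A B : K -> Prop, I B -> (forall x, A x -> B x) -> I A) ->
  indecomposable theta K I -> has_cof O theta -> ~ I A ->
  exists x : O, ~ I (fun alpha => A alpha /\ wo_lt (f alpha) x).
Proof.
  intros Hmono Hind Hcof HA.
  destruct (proj1 Hcof) as [X [HXc [g [Hginj _]]]].
  set (piece := fun (i : theta) alpha => exists y : {y | X y},
          g y = i /\ A alpha /\ (f alpha = proj1_sig y \/ wo_lt (f alpha) (proj1_sig y))).
  assert (Hcover : ~ I (fun alpha => exists i, piece i alpha)).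
  { intro HI. apply HA. apply (Hmono _ _ HI). intros alpha Ha.
    destruct (HXc (f alpha)) as [y [Hy Hle]].
    exists (g (exist _ y Hy)), (exist _ y Hy). simpl. auto. }
  destruct (Hind piece Hcover) as [w [[_ Hw] HIw]].
  assert (Hsmall : ~ card_le theta {y : {y | X y} | w (g y)}).
  { intro Hc. apply Hw. apply (card_le_trans _ _ _ Hc).
    exists (fun s => exist w (g (proj1_sig s)) (proj2_sig s)).
    intros [a Ha] [b Hb] Eab. injection Eab as Eab.
    apply Hginj in Eab. subst. f_equal. apply proof_irrelevance. }
  destruct (small_family_strictly_bounded _ _ _ (fun s => proj1_sig (proj1_sig s))
              Hcof Hsmall) as [x Hx].
  exists x. intro HI. apply HIw. apply (Hmono _ _ HI).
  intros alpha [i [Hwi [y [<- [HAa Hle]]]]]. split; [exact HAa|].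
  specialize (Hx (exist _ y Hwi)). simpl in Hx.
  destruct Hle as [-> | L]; [exact Hx | exact (wo_trans _ _ _ _ L Hx)].
Qed.

Lemma exists_bounding_sequence (theta O : wordered) (h : O -> O) :
  is_cardinal theta -> has_cof O theta ->
  exists b : theta -> O, forall i j, wo_lt j i -> wo_lt (h (b j)) (b i).
Proof.
  intros Hcard Hcof.
  assert (Hbound : forall (i : theta) (rec : forall j, wo_lt j i -> O),
      exists y, forall j (H : wo_lt j i), wo_lt (h (rec j H)) y).
  { intros i rec.
    destruct (small_family_strictly_bounded O theta (below i)
                (fun s => h (rec (proj1_sig s) (proj2_sig s))) Hcof (Hcard i)) as [y Hy].
    exists y. intros j H. exact (Hy (exist _ j H)). }
  pose (step := fun i rec => proj1_sig (constructive_indefinite_description _ (Hbound i rec))).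
  pose (b := Fix (wo_wf theta) (fun _ => O) step).
  exists b. intros i j Hji.
  replace (b i) with (step i (fun j _ => b j)).
  2: { symmetry. apply (Fix_eq (wo_wf theta) (fun _ => wo_car O) step).
    intros x f1 f2 Hf.
    replace f2 with f1; [reflexivity|].
    apply functional_extensionality_dep; intro.
    apply functional_extensionality; auto. }
  exact (proj2_sig (constructive_indefinite_description _ (Hbound i _)) j Hji).
Qed.

Lemma weakly_saturated_disjoint (T : Type) (K : wordered) (I : (K -> Prop) -> Prop)
    (P : T -> K -> Prop) (i0 : T) :
  weakly_saturated T K I ->
  (forall A B : K -> Prop, I B -> (forall x, A x -> B x) -> I A) ->
  (forall i j x, P i x -> P j x -> i = j) ->
  exists i, I (P i).
Proof.
  intros Hsat Hmono Hdisj. apply NNPP. intro Hpos. apply Hsat.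
  (* The points outside every [P i] are thrown into [P i0]. *)
  exists (fun i alpha => P i alpha \/ (i = i0 /\ ~ exists j, P j alpha)).
  split; [|split].
  - intros i j alpha [Pi|[-> Ni]] [Pj|[-> Nj]]; eauto; exfalso; eauto.
  - intro alpha. destruct (classic (exists j, P j alpha)) as [[j Hj]|Hn]; eauto.
  - intros i HI. apply Hpos. exists i. apply (Hmono _ _ HI). auto.
Qed.

Definition layer {T K O : wordered} (b : T -> O) (f : K -> O) (i : T) (alpha : K) : Prop :=
  superlevel f (b i) alpha /\ forall j, wo_lt i j -> wo_lt (f alpha) (b j).

Lemma layer_disjoint (T K O : wordered) (b : T -> O) (f : K -> O) i j alpha :
  layer b f i alpha -> layer b f j alpha -> i = j.
Proof.
  assert (Hlt : forall i j, wo_lt i j -> layer b f i alpha -> ~ layer b f j alpha).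
  { intros i' j' Hij [_ Hi] [[E|L] _]; specialize (Hi j' Hij).
    - rewrite E in Hi. exact (wo_irrefl _ _ Hi).
    - exact (wo_irrefl _ _ (wo_trans _ _ _ _ L Hi)). }
  intros Li Lj. destruct (wo_total _ i j) as [H|[H|H]]; auto;
    exfalso; [exact (Hlt _ _ H Li Lj) | exact (Hlt _ _ H Lj Li)].
Qed.

Theorem corollary2p3 (theta kappa delta : wordered)
    (I : (kappa -> Prop) -> Prop) :
  is_regular theta ->
  is_cardinal kappa ->
  card_lt theta kappa ->
  is_ideal kappa I ->
  weakly_saturated theta kappa I ->
  indecomposable theta kappa I ->
  has_cof delta theta ->
  forall f : kappa -> delta,
    exists beta : delta, I (fun alpha => f alpha = beta \/ wo_lt beta (f alpha)).
Proof.
  intros [Hcard [[n _] _]] _ _ [_ [Hmono _]] Hsat Hind Hcof f.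
  apply NNPP. intro Hpos.
  assert (Hband : forall beta, exists x,
      ~ I (fun alpha => superlevel f beta alpha /\ wo_lt (f alpha) x)).
  { intro beta. apply (indecomposable_positive_band theta); auto.
    intro HI. apply Hpos. exists beta. exact HI. }
  pose (h := fun beta => proj1_sig (constructive_indefinite_description _ (Hband beta))).
  destruct (exists_bounding_sequence theta delta h Hcard Hcof) as [b Hb].
  destruct (weakly_saturated_disjoint theta kappa I (layer b f) (n 0) Hsat Hmono
              (layer_disjoint theta kappa delta b f)) as [i HI].
  apply (proj2_sig (constructive_indefinite_description _ (Hband (b i)))).
  apply (Hmono _ _ HI). intros alpha [Hsup Hlt]. split; [exact Hsup|].
  intros j Hij. exact (wo_trans _ _ _ _ Hlt (Hb j i Hij)).
Qed.
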